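(* For $\mu\in(-1,0.55]$, all periodic orbits of the Sprott vector field $f_\mu$ are contained in $K_\mu$, every nonstationary periodic orbit is contained in $K_\mu\setminus\Delta$, and every nonstationary periodic orbit $\gamma$ satisfies $\frac{1}{2\pi}\int_\gamma d\theta\le-1$. For $\mu=-1$, $f_{-1}$ has no nonstationary periodic orbits.
   Context: The Sprott vector field $f_\mu$ on $\mathbb{R}^3$ is $\dot x=y^2-z-\mu x$, $\dot y=z^2-x-\mu y$, $\dot z=x^2-y-\mu z$. $\Delta:=\mathrm{span}\{(1,1,1)\}$; $\|\mathbf{x}_\perp\|^2=\tfrac23(x^2+y^2+z^2-xy-yz-zx)$; $d\theta:=\frac{1}{\sqrt3}\frac{(z-y)dx+(x-z)dy+(y-x)dz}{\|\mathbf{x}_\perp\|^2}$ on $\mathbb{R}^3\setminus\Delta$; $\int_\gamma$ is over the orbit traversed once in the flow direction. $V(\mathbf{x}):=x+y+z$, $r_\mu:=\|\mathbf{x}-\frac{1+\mu}{2}(1,1,1)\|$, $c:=\frac{3^{3/4}+3^{1/4}}{2}$, and for $\mu>-1$, $K_\mu:=\{\mathbf{x}\colon V(\mathbf{x})\ge r_\mu-c(1+\mu)\arctan(\frac{2r_\mu}{3^{1/4}(1+\mu)})-\frac{\sqrt3}{2}(1+\mu)+c(1+\mu)\arctan(3^{1/4})\}\cap V^{-1}[0,3(1+\mu)]$. *)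

From Stdlib Require Import Reals Lra.
Open Scope R_scope.

Definition sprott_fx (mu x y z : R) : R := y ^ 2 - z - mu * x.
Definition sprott_fy (mu x y z : R) : R := z ^ 2 - x - mu * y.
Definition sprott_fz (mu x y z : R) : R := x ^ 2 - y - mu * z.

Definition is_solution (mu : R) (x y z : R -> R) : Prop :=
  forall t : R,
    derivable_pt_lim x t (sprott_fx mu (x t) (y t) (z t)) /\
    derivable_pt_lim y t (sprott_fy mu (x t) (y t) (z t)) /\
    derivable_pt_lim z t (sprott_fz mu (x t) (y t) (z t)).

Definition is_period (x y z : R -> R) (T : R) : Prop :=
  forall t : R, x (t + T) = x t /\ y (t + T) = y t /\ z (t + T) = z t.

(* A periodic solution (its image is a periodic orbit). *)
Definition periodic_solution (mu : R) (x y z : R -> R) : Prop :=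
  is_solution mu x y z /\ exists T : R, 0 < T /\ is_period x y z T.

Definition stationary (x y z : R -> R) : Prop :=
  forall t : R, x t = x 0 /\ y t = y 0 /\ z t = z 0.

(* T is the minimal (prime) period: traversing [0,T] runs the orbit once. *)
Definition minimal_period (x y z : R -> R) (T : R) : Prop :=
  0 < T /\ is_period x y z T /\
  forall s : R, 0 < s < T -> ~ is_period x y z s.

Definition in_Delta (x y z : R) : Prop := x = y /\ y = z.

Definition perp_norm2 (x y z : R) : R :=
  2 / 3 * (x ^ 2 + y ^ 2 + z ^ 2 - x * y - y * z - z * x).

Definition dtheta (x y z u v w : R) : R :=
  / sqrt 3 * (((z - y) * u + (x - z) * v + (y - x) * w) / perp_norm2 x y z).

Definition V (x y z : R) : R := x + y + z.

Definition r_mu (mu x y z : R) : R :=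
  let a := (1 + mu) / 2 in
  sqrt ((x - a) ^ 2 + (y - a) ^ 2 + (z - a) ^ 2).

Definition c_const : R := (Rpower 3 (3 / 4) + Rpower 3 (1 / 4)) / 2.

Definition in_K (mu x y z : R) : Prop :=
  let r := r_mu mu x y z in
  V x y z >= r - c_const * (1 + mu) * atan (2 * r / (Rpower 3 (1 / 4) * (1 + mu)))
             - sqrt 3 / 2 * (1 + mu)
             + c_const * (1 + mu) * atan (Rpower 3 (1 / 4))
  /\ 0 <= V x y z <= 3 * (1 + mu).

Definition dtheta_along (mu : R) (x y z : R -> R) (t : R) : R :=
  dtheta (x t) (y t) (z t)
    (sprott_fx mu (x t) (y t) (z t))
    (sprott_fy mu (x t) (y t) (z t))
    (sprott_fz mu (x t) (y t) (z t)).

From Stdlib Require Import Reals Lra Psatz ZArith Lia.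
From Coquelicot Require Import Coquelicot.
Open Scope R_scope.

(* Write b = 1 + mu, a = b / 2, V = x + y + z, L = ||x_perp||^2 and r = r_mu.
   At an extremum of V along a periodic orbit V' = |x|^2 - b V vanishes, and
   V^2 <= 3 |x|^2 then gives 0 <= V <= 3 b; for b = 0 this pins the orbit at the origin.
   On Delta the flow reduces to V' = V (V / 3 - b) <= 0, and along the orbit L' >= - K L,
   so a nonstationary periodic orbit never meets Delta; for b <= 2/3 the function
   L exp(3 V / 4) increases strictly off Delta, so there is no such orbit at all.
   The lower boundary of K_mu is V = g(r), where g' = (4 r^2 - 3 b^2) / (sqrt 3 b^2 + 4 r^2).
   Where r <= sqrt 3 a the bound V >= g(r) holds pointwise, and where r > sqrt 3 a the gap
   V - g(r) is nondecreasing along the flow; as V' = r^2 - 3 a^2 vanishes at the maximum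
   of V, the orbit cannot leave K_mu. Inside K_mu the numerator of dtheta(f) is negative,
   so the angle of x_perp strictly decreases, and after one period it has closed up at a
   nonzero multiple of - 2 pi. *)

(** * Calculus on the real line *)

Lemma is_derive_continuity_pt (h : R -> R) t l : is_derive h t l -> continuity_pt h t.
Proof.
  intros Hd. apply derivable_continuous_pt. exists l. now apply is_derive_Reals.
Qed.

Lemma MVT_is_derive (h h' : R -> R) a b : a < b ->
  (forall t, a < t < b -> is_derive h t (h' t)) ->
  (forall t, a <= t <= b -> continuity_pt h t) ->
  exists c, a < c < b /\ h b - h a = h' c * (b - a).
Proof.
  intros Hab Hd Hc.
  assert (pr : forall c, a < c < b -> derivable_pt h c).
  { intros c Hc'. exists (h' c). now apply is_derive_Reals, Hd. }
  destruct (MVT h id a b pr (fun c _ => derivable_pt_id c) Hab Hc) as [c [Pc Hm]].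
  { intros c _. apply derivable_continuous_pt, derivable_pt_id. }
  exists c. split; [exact Pc|].
  rewrite (derive_pt_eq_0 h c (h' c) (pr c Pc)) in Hm by now apply is_derive_Reals, Hd.
  rewrite (derive_pt_eq_0 id c 1 _ (derivable_pt_lim_id c)) in Hm.
  unfold id in Hm. lra.
Qed.

Lemma is_derive_ge0_le (h h' : R -> R) a b : a <= b ->
  (forall t, a < t < b -> is_derive h t (h' t)) ->
  (forall t, a <= t <= b -> continuity_pt h t) ->
  (forall t, a < t < b -> 0 <= h' t) -> h a <= h b.
Proof.
  intros Hab Hd Hc Hpos. destruct (Req_dec a b) as [<-|Hne]; [lra|].
  destruct (MVT_is_derive h h' a b ltac:(lra) Hd Hc) as [c [Hc1 Hm]].
  specialize (Hpos c Hc1). nra.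
Qed.

Lemma is_derive_lt0_lt (h h' : R -> R) a b : a < b ->
  (forall t, a < t < b -> is_derive h t (h' t)) ->
  (forall t, a <= t <= b -> continuity_pt h t) ->
  (forall t, a < t < b -> h' t < 0) -> h b < h a.
Proof.
  intros Hab Hd Hc Hneg.
  destruct (MVT_is_derive h h' a b Hab Hd Hc) as [c [Hc1 Hm]].
  specialize (Hneg c Hc1). nra.
Qed.

Lemma is_derive_0_eq (h : R -> R) : (forall t, is_derive h t 0) -> forall a b, h a = h b.
Proof.
  intros Hd.
  assert (Hle : forall a b, a < b -> h a = h b).
  { intros a b Hab.
    destruct (MVT_is_derive h (fun _ => 0) a b Hab (fun t _ => Hd t)
      (fun t _ => is_derive_continuity_pt h t 0 (Hd t))) as [c [_ Hm]]. lra. }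
  intros a b. destruct (Rtotal_order a b) as [H|[H|H]]; [auto|congruence|].
  symmetry. auto.
Qed.

Lemma constant_is_derive_0 (h : R -> R) t l : (forall s, h s = h 0) -> is_derive h t l -> l = 0.
Proof.
  intros Hc Hd. apply (is_derive_unique h t l) in Hd. rewrite <- Hd.
  apply is_derive_unique, (is_derive_ext (fun _ => h 0)); [auto|auto_derive; auto].
Qed.

Lemma is_derive_max_0 h t0 l : is_derive h t0 l -> (forall t, h t <= h t0) -> l = 0.
Proof.
  intros Hd Hm. assert (pr : derivable_pt h t0) by (exists l; now apply is_derive_Reals).
  rewrite <- (derive_pt_eq_0 h t0 l pr) by now apply is_derive_Reals.
  apply (deriv_maximum h (t0 - 1) (t0 + 1)); auto; lra.
Qed.

Lemma is_derive_min_0 h t0 l : is_derive h t0 l -> (forall t, h t0 <= h t) -> l = 0.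
Proof.
  intros Hd Hm. assert (pr : derivable_pt h t0) by (exists l; now apply is_derive_Reals).
  rewrite <- (derive_pt_eq_0 h t0 l pr) by now apply is_derive_Reals.
  apply (deriv_minimum h (t0 - 1) (t0 + 1)); auto; lra.
Qed.

Lemma last_nonneg_before (F : R -> R) a b : a <= b ->
  (forall s, a <= s <= b -> continuity_pt F s) -> 0 <= F a -> F b < 0 ->
  exists m, a <= m < b /\ 0 <= F m /\ forall s, m < s <= b -> F s < 0.
Proof.
  intros Hab Hc Ha Hb.
  set (E := fun s => a <= s <= b /\ 0 <= F s).
  assert (HE : bound E) by (exists b; intros s [Hs _]; lra).
  destruct (completeness E HE (ex_intro _ a (conj (conj (Rle_refl a) Hab) Ha)))
    as [m [Hub Hlub]].
  assert (Ham : a <= m) by (apply Hub; split; [lra|auto]).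
  assert (Hmb : m <= b) by (apply Hlub; intros s [Hs _]; lra).
  assert (Hafter : forall s, m < s <= b -> F s < 0).
  { intros s Hs. destruct (Rlt_le_dec (F s) 0) as [h|h]; [exact h|].
    assert (s <= m) by (apply Hub; split; [lra|auto]). lra. }
  assert (HFm : 0 <= F m).
  { destruct (Rle_lt_dec 0 (F m)) as [h|h]; [exact h|exfalso].
    destruct (Hc m (conj Ham Hmb) (- F m) ltac:(lra)) as [d [Hd Hnear]].
    enough (Hub' : is_upper_bound E (m - d / 2)) by (specialize (Hlub _ Hub'); lra).
    intros s [Hs Hs0]. destruct (Rle_lt_dec s (m - d / 2)) as [ok|Hsd]; [exact ok|].
    assert (Hsm : s <= m) by (apply Hub; split; auto).
    destruct (Req_dec s m) as [->|Hne]; [lra|].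
    assert (Hsd' : Rabs (s - m) < d) by (apply Rabs_def1; lra).
    specialize (Hnear s (conj (conj I (not_eq_sym Hne)) Hsd')).
    simpl in Hnear. unfold R_dist in Hnear. apply Rabs_def2 in Hnear. lra. }
  assert (m <> b) by (intros ->; lra).
  exists m. repeat split; auto; lra.
Qed.

(** * Periodic functions *)

Definition periodic (h : R -> R) (T : R) : Prop := forall t, h (t + T) = h t.

Lemma periodic_INR h T : periodic h T -> forall (n : nat) t, h (t + INR n * T) = h t.
Proof.
  intros Hp n. induction n as [|n IH]; intros t.
  - simpl. f_equal. ring.
  - rewrite S_INR. replace (t + (INR n + 1) * T) with ((t + INR n * T) + T) by ring.
    rewrite Hp. apply IH.
Qed.

Lemma periodic_IZR h T : periodic h T -> forall (k : Z) t, h (t + IZR k * T) = h t.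
Proof.
  intros Hp k t. destruct (Z_le_gt_dec 0 k) as [Hk|Hk].
  - destruct (Z_of_nat_complete k Hk) as [n ->]. rewrite <- INR_IZR_INZ.
    now apply periodic_INR.
  - destruct (Z_of_nat_complete (- k) ltac:(lia)) as [n Hn].
    replace k with (- Z.of_nat n)%Z by lia. rewrite opp_IZR, <- INR_IZR_INZ.
    rewrite <- (periodic_INR h T Hp n (t + - INR n * T)). f_equal. ring.
Qed.

Lemma shift_into_period T : 0 < T -> forall t, exists k : Z, 0 <= t + IZR k * T <= T.
Proof.
  intros HT t. destruct (archimed (- t / T)) as [H1 H2].
  exists (up (- t / T)).
  replace (t + IZR (up (- t / T)) * T) with (T * (IZR (up (- t / T)) - (- t / T)))
    by (field; lra).
  split; [apply Rmult_le_pos|]; nra.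
Qed.

Lemma shift_below T : 0 < T -> forall t s, exists k : Z, t + IZR k * T <= s.
Proof.
  intros HT t s. destruct (shift_into_period T HT (t - s)) as [k Hk].
  exists (k - 1)%Z. rewrite minus_IZR. nra.
Qed.

Lemma periodic_max h T : 0 < T -> periodic h T -> (forall t, continuity_pt h t) ->
  exists t0, forall t, h t <= h t0.
Proof.
  intros HT Hp Hc.
  destruct (continuity_ab_maj h 0 T ltac:(lra) (fun c _ => Hc c)) as [M [HM _]].
  exists M. intros t. destruct (shift_into_period T HT t) as [k Hk].
  rewrite <- (periodic_IZR h T Hp k t). auto.
Qed.

Lemma periodic_min h T : 0 < T -> periodic h T -> (forall t, continuity_pt h t) ->
  exists t0, forall t, h t0 <= h t.
Proof.
  intros HT Hp Hc.
  destruct (continuity_ab_min h 0 T ltac:(lra) (fun c _ => Hc c)) as [M [HM _]].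
  exists M. intros t. destruct (shift_into_period T HT t) as [k Hk].
  rewrite <- (periodic_IZR h T Hp k t). auto.
Qed.

Lemma periodic_is_derive_ge0_const h h' T : 0 < T -> periodic h T ->
  (forall t, is_derive h t (h' t)) -> (forall t, 0 <= h' t) -> forall t, h t = h 0.
Proof.
  intros HT Hp Hd Hpos.
  assert (Hmono : forall u v, u <= v -> h u <= h v).
  { intros u v Huv. apply (is_derive_ge0_le h h'); auto.
    intros s _. apply (is_derive_continuity_pt h s (h' s)), Hd. }
  intros t. destruct (shift_below T HT 0 t) as [k1 Hk1].
  destruct (shift_below T HT t 0) as [k2 Hk2]. apply Rle_antisym.
  - rewrite <- (periodic_IZR h T Hp k2 t). auto.
  - rewrite <- (periodic_IZR h T Hp k1 0). auto.
Qed.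

(** * The Sprott field and the geometry of Delta *)

Definition along (F : R -> R -> R -> R) (x y z : R -> R) (t : R) : R := F (x t) (y t) (z t).

Lemma is_period_along F x y z T : is_period x y z T -> periodic (along F x y z) T.
Proof. intros Hp t. unfold along. destruct (Hp t) as [-> [-> ->]]. reflexivity. Qed.

Definition dist2 (a x y z : R) : R := (x - a) ^ 2 + (y - a) ^ 2 + (z - a) ^ 2.

Lemma dist2_ge0 a x y z : 0 <= dist2 a x y z.
Proof.
  unfold dist2. pose proof (pow2_ge_0 (x - a)). pose proof (pow2_ge_0 (y - a)).
  pose proof (pow2_ge_0 (z - a)). lra.
Qed.

Lemma r_mu_sqrt mu x y z : r_mu mu x y z = sqrt (dist2 ((1 + mu) / 2) x y z).
Proof. reflexivity. Qed.

Lemma r_mu_ge0 mu x y z : 0 <= r_mu mu x y z.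
Proof. apply sqrt_pos. Qed.

Lemma r_mu_sq mu x y z : r_mu mu x y z ^ 2 = dist2 ((1 + mu) / 2) x y z.
Proof. rewrite r_mu_sqrt, <- Rsqr_pow2. apply Rsqr_sqrt, dist2_ge0. Qed.

Lemma dist2_decomp a x y z :
  dist2 a x y z = 3 * ((x + y + z) / 3 - a) ^ 2 + perp_norm2 x y z.
Proof. unfold dist2, perp_norm2. field. Qed.

Lemma perp_norm2_sos x y z :
  perp_norm2 x y z = ((x - y) ^ 2 + (y - z) ^ 2 + (z - x) ^ 2) / 3.
Proof. unfold perp_norm2. field. Qed.

Lemma perp_norm2_ge0 x y z : 0 <= perp_norm2 x y z.
Proof.
  rewrite perp_norm2_sos. pose proof (pow2_ge_0 (x - y)). pose proof (pow2_ge_0 (y - z)).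
  pose proof (pow2_ge_0 (z - x)). lra.
Qed.

Lemma perp_norm2_eq0 x y z : perp_norm2 x y z = 0 -> in_Delta x y z.
Proof.
  rewrite perp_norm2_sos. intros H. pose proof (pow2_ge_0 (x - y)). pose proof (pow2_ge_0 (y - z)).
  pose proof (pow2_ge_0 (z - x)). split; nra.
Qed.

Lemma perp_norm2_gt0 x y z : ~ in_Delta x y z -> 0 < perp_norm2 x y z.
Proof.
  intros H. destruct (Rle_lt_or_eq_dec _ _ (perp_norm2_ge0 x y z)) as [h|h]; [exact h|].
  exfalso. apply H, perp_norm2_eq0. auto.
Qed.

Lemma in_Delta_perp_norm2 x y z : in_Delta x y z -> perp_norm2 x y z = 0.
Proof. intros [-> ->]. unfold perp_norm2. ring. Qed.

Lemma sum_sq_le a b c : (a + b + c) ^ 2 <= 3 * (a ^ 2 + b ^ 2 + c ^ 2).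
Proof.
  pose proof (pow2_ge_0 (a - b)). pose proof (pow2_ge_0 (b - c)). pose proof (pow2_ge_0 (c - a)).
  nra.
Qed.

Definition cyclic_cubic (x y z : R) : R :=
  let m := (x + y + z) / 3 in
  (x - m) * (y - m) ^ 2 + (y - m) * (z - m) ^ 2 + (z - m) * (x - m) ^ 2.

Definition rotation_cubic (x y z : R) : R :=
  let m := (x + y + z) / 3 in
  (x - m) ^ 2 * (y - x) + (y - m) ^ 2 * (z - y) + (z - m) ^ 2 * (x - z).

(* With p + q + r = 0 for the components of x_perp, both defects below are
   squares of combinations of (p - q)(q - r)(r - p) and pqr. *)
Lemma cyclic_cubic_sq_le x y z : cyclic_cubic x y z ^ 2 <= perp_norm2 x y z ^ 3 / 6.
Proof.
  unfold cyclic_cubic. set (m := (x + y + z) / 3).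
  replace (perp_norm2 x y z) with ((x - m) ^ 2 + (y - m) ^ 2 + (z - m) ^ 2)
    by (unfold perp_norm2, m; field).
  replace (z - m) with (- (x - m) - (y - m)) by (unfold m; field).
  set (p := x - m). set (q := y - m).
  set (D := (p - q) * (q - (- p - q)) * ((- p - q) - p)). set (e := p * q * (- p - q)).
  pose proof (pow2_ge_0 (D + 9 * e)).
  enough (E : (p ^ 2 + q ^ 2 + (- p - q) ^ 2) ^ 3 / 6
              - (p * q ^ 2 + q * (- p - q) ^ 2 + (- p - q) * p ^ 2) ^ 2 = (D + 9 * e) ^ 2 / 12)
    by lra.
  unfold D, e. field.
Qed.

Lemma rotation_cubic_sq_le x y z : rotation_cubic x y z ^ 2 <= perp_norm2 x y z ^ 3 / 2.
Proof.
  unfold rotation_cubic. set (m := (x + y + z) / 3).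
  replace (perp_norm2 x y z) with ((x - m) ^ 2 + (y - m) ^ 2 + (z - m) ^ 2)
    by (unfold perp_norm2, m; field).
  replace (y - x) with ((y - m) - (x - m)) by ring.
  replace (z - y) with ((z - m) - (y - m)) by ring.
  replace (x - z) with ((x - m) - (z - m)) by ring.
  replace (z - m) with (- (x - m) - (y - m)) by (unfold m; field).
  set (p := x - m). set (q := y - m).
  set (D := (p - q) * (q - (- p - q)) * ((- p - q) - p)). set (e := p * q * (- p - q)).
  pose proof (pow2_ge_0 (3 * e - D)).
  enough (E : (p ^ 2 + q ^ 2 + (- p - q) ^ 2) ^ 3 / 2
              - (p ^ 2 * (q - p) + q ^ 2 * ((- p - q) - q) + (- p - q) ^ 2 * (p - (- p - q))) ^ 2
              = 3 * (3 * e - D) ^ 2 / 4)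
    by lra.
  unfold D, e. field.
Qed.

Section FlowIdentities.
Variables (mu x y z : R).
Let a := (1 + mu) / 2.
Let n := (x + y + z) / 3 - a.
Let fx := sprott_fx mu x y z.
Let fy := sprott_fy mu x y z.
Let fz := sprott_fz mu x y z.

Lemma sprott_sum : fx + fy + fz = x ^ 2 + y ^ 2 + z ^ 2 - (1 + mu) * (x + y + z).
Proof. unfold fx, fy, fz, sprott_fx, sprott_fy, sprott_fz. ring. Qed.

Lemma sprott_sum_dist2 : fx + fy + fz = dist2 a x y z - 3 * a ^ 2.
Proof. unfold fx, fy, fz, sprott_fx, sprott_fy, sprott_fz, dist2, a. field. Qed.

Lemma perp_norm2_flow :
  2 / 3 * (2 * x * fx + 2 * y * fy + 2 * z * fz
           - (fx * y + x * fy) - (fy * z + y * fz) - (fz * x + z * fx))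
  = 2 * perp_norm2 x y z * (3 / 2 - 3 * a - n) + 2 * cyclic_cubic x y z.
Proof.
  unfold fx, fy, fz, sprott_fx, sprott_fy, sprott_fz, perp_norm2, cyclic_cubic, n, a. field.
Qed.

Lemma dist2_flow : (x - a) * fx + (y - a) * fy + (z - a) * fz
  = 3 * n ^ 3 + cyclic_cubic x y z - 3 / 2 * mu * perp_norm2 x y z - 3 * a ^ 2 * n.
Proof.
  unfold fx, fy, fz, sprott_fx, sprott_fy, sprott_fz, perp_norm2, cyclic_cubic, n, a. field.
Qed.

Lemma dtheta_numerator_flow : (z - y) * fx + (x - z) * fy + (y - x) * fz
  = - (3 / 2) * perp_norm2 x y z * (1 + 2 * (x + y + z) / 3) + rotation_cubic x y z.
Proof. unfold fx, fy, fz, sprott_fx, sprott_fy, sprott_fz, perp_norm2, rotation_cubic. field. Qed.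

End FlowIdentities.

Lemma solution_is_derive mu x y z : is_solution mu x y z -> forall t,
  is_derive x t (sprott_fx mu (x t) (y t) (z t)) /\
  is_derive y t (sprott_fy mu (x t) (y t) (z t)) /\
  is_derive z t (sprott_fz mu (x t) (y t) (z t)).
Proof.
  intros H t. destruct (H t) as [hx [hy hz]].
  refine (conj _ (conj _ _)); now apply is_derive_Reals.
Qed.

Ltac fold_Derive := repeat match goal with |- context [Derive (fun u => ?f u) ?t] =>
  change (Derive (fun u => f u) t) with (Derive f t) end.

(* Differentiates a polynomial in x(t), y(t), z(t) along a solution [Hs]. *)
Ltac derive_along Hs t :=
  let hx := fresh in let hy := fresh in let hz := fresh in
  destruct (solution_is_derive _ _ _ _ Hs t) as [hx [hy hz]];
  auto_derive; [repeat split; eexists; eassumption | fold_Derive;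
    rewrite ?(is_derive_unique _ _ _ hx), ?(is_derive_unique _ _ _ hy),
      ?(is_derive_unique _ _ _ hz)].

Section AlongSolution.
Variables (mu : R) (x y z : R -> R).
Hypothesis Hs : is_solution mu x y z.

Lemma is_derive_V_along t :
  is_derive (along V x y z) t (x t ^ 2 + y t ^ 2 + z t ^ 2 - (1 + mu) * along V x y z t).
Proof. unfold along, V. derive_along Hs t. rewrite <- sprott_sum. ring. Qed.

Lemma is_derive_V_along_dist2 t :
  is_derive (along V x y z) t (along (dist2 ((1 + mu) / 2)) x y z t - 3 * ((1 + mu) / 2) ^ 2).
Proof. unfold along, V. derive_along Hs t. rewrite <- sprott_sum_dist2. ring. Qed.

Lemma is_derive_perp_along t : is_derive (along perp_norm2 x y z) t
  (2 * along perp_norm2 x y z t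
     * (3 / 2 - 3 * ((1 + mu) / 2) - (along V x y z t / 3 - (1 + mu) / 2))
   + 2 * along cyclic_cubic x y z t).
Proof. unfold along, V. rewrite <- perp_norm2_flow. unfold perp_norm2. derive_along Hs t. ring. Qed.

Definition dist2_rate t :=
  3 * (along V x y z t / 3 - (1 + mu) / 2) ^ 3 + along cyclic_cubic x y z t
  - 3 / 2 * mu * along perp_norm2 x y z t
  - 3 * ((1 + mu) / 2) ^ 2 * (along V x y z t / 3 - (1 + mu) / 2).

Lemma is_derive_dist2_along t :
  is_derive (along (dist2 ((1 + mu) / 2)) x y z) t (2 * dist2_rate t).
Proof.
  unfold dist2_rate, along, V. rewrite <- dist2_flow. unfold dist2. derive_along Hs t. ring.
Qed.

Lemma continuity_V_along t : continuity_pt (along V x y z) t.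
Proof. eapply is_derive_continuity_pt, is_derive_V_along. Qed.

Lemma continuity_perp_along t : continuity_pt (along perp_norm2 x y z) t.
Proof. eapply is_derive_continuity_pt, is_derive_perp_along. Qed.

Lemma continuity_dist2_along t : continuity_pt (along (dist2 ((1 + mu) / 2)) x y z) t.
Proof. eapply is_derive_continuity_pt, is_derive_dist2_along. Qed.

End AlongSolution.

(** * Periodic orbits near Delta *)

Lemma periodic_V_bounds mu x y z : periodic_solution mu x y z -> 0 <= 1 + mu ->
  forall t, 0 <= along V x y z t <= 3 * (1 + mu).
Proof.
  intros [Hs [T [HT Hp]]] Hb t.
  pose proof (is_period_along V x y z T Hp) as HpV.
  destruct (periodic_max _ T HT HpV (continuity_V_along mu x y z Hs)) as [t0 Hmax].
  destruct (periodic_min _ T HT HpV (continuity_V_along mu x y z Hs)) as [t1 Hmin].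
  pose proof (is_derive_max_0 _ _ _ (is_derive_V_along mu x y z Hs t0) Hmax) as E0.
  pose proof (is_derive_min_0 _ _ _ (is_derive_V_along mu x y z Hs t1) Hmin) as E1.
  pose proof (sum_sq_le (x t0) (y t0) (z t0)) as C0.
  pose proof (sum_sq_le (x t1) (y t1) (z t1)) as C1.
  specialize (Hmax t). specialize (Hmin t). unfold along, V in *.
  split.
  - assert (0 <= x t1 + y t1 + z t1) by nra. lra.
  - assert (x t0 + y t0 + z t0 <= 3 * (1 + mu)) by nra. lra.
Qed.

Lemma periodic_mu_m1_stationary x y z : periodic_solution (-1) x y z -> stationary x y z.
Proof.
  intros Hps. pose proof (periodic_V_bounds _ _ _ _ Hps ltac:(lra)) as HV.
  destruct Hps as [Hs _].
  assert (Hzero : forall t, x t = 0 /\ y t = 0 /\ z t = 0).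
  { intros t. assert (Hc : forall s, along V x y z s = along V x y z 0).
    { intros s. pose proof (HV s). pose proof (HV 0). lra. }
    pose proof (constant_is_derive_0 _ _ _ Hc (is_derive_V_along _ _ _ _ Hs t)) as E.
    pose proof (HV t). pose proof (pow2_ge_0 (x t)). pose proof (pow2_ge_0 (y t)).
    pose proof (pow2_ge_0 (z t)). unfold along, V in *. repeat split; nra. }
  intros t. destruct (Hzero t) as [-> [-> ->]]. destruct (Hzero 0) as [-> [-> ->]]. auto.
Qed.

Lemma periodic_in_Delta_stationary mu x y z : periodic_solution mu x y z -> 0 <= 1 + mu ->
  (forall t, in_Delta (x t) (y t) (z t)) -> stationary x y z.
Proof.
  intros Hps Hb HD. pose proof (periodic_V_bounds _ _ _ _ Hps Hb) as HV.
  destruct Hps as [Hs [T [HT Hp]]].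
  assert (Hc : forall t, - along V x y z t = - along V x y z 0).
  { apply (periodic_is_derive_ge0_const (fun s => - along V x y z s)
      (fun s => - (x s ^ 2 + y s ^ 2 + z s ^ 2 - (1 + mu) * along V x y z s)) T HT).
    - intros s. simpl. now rewrite (is_period_along V x y z T Hp s).
    - intros s. apply (is_derive_opp (along V x y z)), is_derive_V_along, Hs.
    - intros s. destruct (HD s) as [e1 e2]. pose proof (HV s). unfold along, V in *.
      rewrite <- e2, <- e1 in *. nra. }
  intros t. specialize (Hc t). destruct (HD t) as [e1 e2]. destruct (HD 0) as [e3 e4].
  unfold along, V in Hc. repeat split; lra.
Qed.

Lemma small_mu_rate_pos a n L c : 0 < a <= 1 / 3 -> - a <= n <= a -> 0 < L ->
  c ^ 2 <= L ^ 3 / 6 ->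
  0 < 2 * L * (3 / 2 - 3 * a - n) + 2 * c + 3 / 4 * (3 * n ^ 2 + L - 3 * a ^ 2) * L.
Proof.
  intros Ha Hn HL Hc.
  set (Y0 := 3 / 2 - 3 * a - n + 3 / 8 * (3 * n ^ 2 - 3 * a ^ 2)).
  assert (HY0 : 1 / 6 <= Y0).
  { assert (E : Y0 - (3 / 2 - 4 * a) = (a - n) * (1 - 9 / 8 * (a + n))) by (unfold Y0; field).
    assert (0 <= (a - n) * (1 - 9 / 8 * (a + n))) by (apply Rmult_le_pos; lra). lra. }
  set (Y := Y0 + 3 / 8 * L).
  replace (2 * L * (3 / 2 - 3 * a - n) + 2 * c + 3 / 4 * (3 * n ^ 2 + L - 3 * a ^ 2) * L)
    with (2 * (L * Y + c)) by (unfold Y, Y0; field).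
  assert (HY : L / 6 < Y ^ 2).
  { unfold Y. assert (9 / 64 * L ^ 2 - L / 24 + 1 / 36 > 0) by nra. nra. }
  assert (0 < Y) by (unfold Y; lra).
  assert (c ^ 2 < (L * Y) ^ 2).
  { assert (L ^ 3 / 6 < L ^ 2 * Y ^ 2) by (assert (0 < L ^ 2) by nra; nra). nra. }
  assert (0 < L * Y) by nra.
  nra.
Qed.

Lemma cyclic_cubic_Delta x y z : perp_norm2 x y z = 0 -> cyclic_cubic x y z = 0.
Proof. intros H. pose proof (cyclic_cubic_sq_le x y z) as B. rewrite H in B. nra. Qed.

Lemma periodic_small_mu_stationary mu x y z : periodic_solution mu x y z ->
  0 < 1 + mu <= 2 / 3 -> stationary x y z.
Proof.
  intros Hps Hb. pose proof (periodic_V_bounds _ _ _ _ Hps ltac:(lra)) as HV.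
  destruct Hps as [Hs [T [HT Hp]]].
  set (L := along perp_norm2 x y z). set (a := (1 + mu) / 2).
  set (n := fun t => along V x y z t / 3 - a).
  set (dL := fun t => 2 * L t * (3 / 2 - 3 * a - n t) + 2 * along cyclic_cubic x y z t).
  set (dV := fun t => along (dist2 a) x y z t - 3 * a ^ 2).
  set (Psi := fun t => L t * exp (3 / 4 * along V x y z t)).
  set (dPsi := fun t => exp (3 / 4 * along V x y z t) * (dL t + 3 / 4 * dV t * L t)).
  assert (Hd : forall t, is_derive Psi t (dPsi t)).
  { intros t. pose proof (is_derive_perp_along mu x y z Hs t) as hL.
    pose proof (is_derive_V_along_dist2 mu x y z Hs t) as hV. fold L in hL.
    unfold Psi. auto_derive; [repeat split; eexists; eassumption|].
    fold_Derive. rewrite (is_derive_unique _ _ _ hL), (is_derive_unique _ _ _ hV).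
    unfold dPsi, dL, dV, n, a. ring. }
  assert (Hrate : forall t, 0 < L t -> 0 < dL t + 3 / 4 * dV t * L t).
  { intros t HL. unfold dL, dV, along. rewrite dist2_decomp.
    pose proof (HV t). pose proof (cyclic_cubic_sq_le (x t) (y t) (z t)).
    apply small_mu_rate_pos; unfold L, n, a, along, V in *; lra. }
  assert (Hpos : forall t, 0 <= dPsi t).
  { intros t. apply Rmult_le_pos; [left; apply exp_pos|].
    destruct (Rle_lt_or_eq_dec _ _ (perp_norm2_ge0 (x t) (y t) (z t))) as [h|h].
    - now apply Rlt_le, Hrate.
    - unfold dL, L, along. rewrite <- h, (cyclic_cubic_Delta _ _ _ (eq_sym h)). lra. }
  assert (HpPsi : periodic Psi T).
  { intros t. unfold Psi, L. now rewrite (is_period_along perp_norm2 x y z T Hp t),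
      (is_period_along V x y z T Hp t). }
  pose proof (periodic_is_derive_ge0_const Psi dPsi T HT HpPsi Hd Hpos) as Hc.
  apply (periodic_in_Delta_stationary mu); [split; [exact Hs| now exists T] | lra |].
  intros t. apply perp_norm2_eq0.
  destruct (Rle_lt_or_eq_dec _ _ (perp_norm2_ge0 (x t) (y t) (z t))) as [h|h]; [|auto].
  exfalso. pose proof (constant_is_derive_0 Psi t (dPsi t) Hc (Hd t)) as E.
  unfold dPsi in E. pose proof (exp_pos (3 / 4 * along V x y z t)).
  pose proof (Hrate t h). nra.
Qed.

Lemma perp_rate_ge a n L c M : 0 <= a -> n <= a -> 0 <= L <= M -> c ^ 2 <= L ^ 3 / 6 ->
  - (3 + 8 * a + M + 1) * L <= 2 * L * (3 / 2 - 3 * a - n) + 2 * c.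
Proof.
  intros Ha Hn HL Hc.
  assert (0 <= L * (6 + 2 * a - 2 * n)) by (apply Rmult_le_pos; lra).
  assert (- (M + 1) * L <= 2 * c).
  { assert ((2 * c) ^ 2 <= ((M + 1) * L) ^ 2).
    { assert (L ^ 3 <= M * L ^ 2) by (assert (0 <= L ^ 2) by nra; nra). nra. }
    assert (0 <= (M + 1) * L) by nra. nra. }
  lra.
Qed.

(* L' >= -K L with K bounding the orbit, so L exp(K t) is nondecreasing. *)
Lemma perp_along_eq0_everywhere mu x y z : periodic_solution mu x y z -> 0 <= 1 + mu ->
  forall t0, along perp_norm2 x y z t0 = 0 -> forall t, along perp_norm2 x y z t = 0.
Proof.
  intros Hps Hb t0 H0. pose proof (periodic_V_bounds _ _ _ _ Hps Hb) as HV.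
  destruct Hps as [Hs [T [HT Hp]]].
  set (L := along perp_norm2 x y z) in *.
  pose proof (is_period_along perp_norm2 x y z T Hp) as HpL. fold L in HpL.
  destruct (periodic_max L T HT HpL (continuity_perp_along mu x y z Hs)) as [tm Hm].
  set (M := L tm).
  set (K := 3 + 8 * ((1 + mu) / 2) + M + 1).
  set (dL := fun t =>
    2 * L t * (3 / 2 - 3 * ((1 + mu) / 2) - (along V x y z t / 3 - (1 + mu) / 2))
    + 2 * along cyclic_cubic x y z t).
  set (H := fun t => L t * exp (K * t)).
  set (dH := fun t => exp (K * t) * (dL t + K * L t)).
  assert (Hd : forall t, is_derive H t (dH t)).
  { intros t. pose proof (is_derive_perp_along mu x y z Hs t) as hL. fold L in hL.
    unfold H. auto_derive; [repeat split; eexists; eassumption|].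
    fold_Derive. rewrite (is_derive_unique _ _ _ hL). unfold dH, dL, L. ring. }
  assert (Hpos : forall t, 0 <= dH t).
  { intros t. apply Rmult_le_pos; [left; apply exp_pos|].
    pose proof (HV t).
    pose proof (perp_rate_ge ((1 + mu) / 2) (along V x y z t / 3 - (1 + mu) / 2) (L t)
      (along cyclic_cubic x y z t) M ltac:(lra) ltac:(lra)
      (conj (perp_norm2_ge0 (x t) (y t) (z t)) (Hm t))
      (cyclic_cubic_sq_le (x t) (y t) (z t))).
    unfold dL, K. lra. }
  intros t. destruct (shift_below T HT t t0) as [k Hk].
  rewrite <- (periodic_IZR _ T HpL k t).
  assert (Hle : H (t + IZR k * T) <= H t0).
  { apply (is_derive_ge0_le H dH); auto.
    intros s _. eapply is_derive_continuity_pt, Hd. }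
  unfold H in Hle. rewrite H0 in Hle.
  pose proof (perp_norm2_ge0 (x (t + IZR k * T)) (y (t + IZR k * T)) (z (t + IZR k * T))).
  pose proof (exp_pos (K * (t + IZR k * T))). unfold L, along in *. nra.
Qed.

(** * The boundary of K_mu *)

Definition qrt3 : R := Rpower 3 (1 / 4).

Lemma qrt3_pos : 0 < qrt3.
Proof. apply exp_pos. Qed.

Lemma qrt3_pow n : qrt3 ^ n = Rpower 3 (1 / 4 * INR n).
Proof. unfold qrt3. rewrite <- Rpower_pow by apply exp_pos. apply Rpower_mult. Qed.

Lemma qrt3_pow4 : qrt3 ^ 4 = 3.
Proof. rewrite qrt3_pow. replace (1 / 4 * INR 4) with 1 by (simpl; field). apply Rpower_1. lra. Qed.

Lemma qrt3_sq : qrt3 ^ 2 = sqrt 3.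
Proof.
  rewrite qrt3_pow. replace (1 / 4 * INR 2) with (/ 2) by (simpl; field).
  apply Rpower_sqrt. lra.
Qed.

Lemma c_const_qrt3 : c_const = (qrt3 ^ 3 + qrt3) / 2.
Proof.
  unfold c_const. rewrite qrt3_pow.
  now replace (1 / 4 * INR 3) with (3 / 4) by (simpl; field).
Qed.

Lemma sqrt3_bounds : 1.732 < sqrt 3 < 1.7321 /\ sqrt 3 ^ 2 = 3.
Proof.
  assert (E : sqrt 3 ^ 2 = 3) by (rewrite <- Rsqr_pow2; apply Rsqr_sqrt; lra).
  pose proof (sqrt_pos 3). repeat split; nra.
Qed.

Definition K_boundary (b r : R) : R :=
  r - c_const * b * atan (2 * r / (qrt3 * b)) - sqrt 3 / 2 * b + c_const * b * atan qrt3.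

Lemma in_K_iff mu x y z : in_K mu x y z <->
  V x y z >= K_boundary (1 + mu) (r_mu mu x y z) /\ 0 <= V x y z <= 3 * (1 + mu).
Proof. reflexivity. Qed.

Lemma K_boundary_qrt3 b r : K_boundary b r =
  r - (qrt3 ^ 3 + qrt3) / 2 * b * atan (2 * r / (qrt3 * b)) - qrt3 ^ 2 / 2 * b
  + (qrt3 ^ 3 + qrt3) / 2 * b * atan qrt3.
Proof. unfold K_boundary. now rewrite c_const_qrt3, qrt3_sq. Qed.

Lemma atan_sub_le u v : 0 <= v <= u -> atan u - atan v <= (u - v) / (1 + u * v).
Proof.
  intros [Hv Hu].
  set (h := fun w => (w - v) / (1 + w * v) - atan w).
  set (h' := fun w => (1 + v ^ 2) / (1 + w * v) ^ 2 - / (1 + w ^ 2)).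
  assert (Hd : forall w, 0 <= w -> is_derive h w (h' w)).
  { intros w Hw. unfold h, h'. auto_derive; [nra|]. field. split; nra. }
  assert (Hle : h v <= h u).
  { apply (is_derive_ge0_le h h'); auto.
    - intros t Ht. apply Hd. lra.
    - intros t Ht. eapply is_derive_continuity_pt, Hd. lra.
    - intros t Ht. unfold h'.
      replace ((1 + v ^ 2) / (1 + t * v) ^ 2 - / (1 + t ^ 2))
        with ((t - v) ^ 2 / ((1 + t * v) ^ 2 * (1 + t ^ 2))) by (field; nra).
      apply Rmult_le_pos; [apply pow2_ge_0|].
      apply Rlt_le, Rinv_0_lt_compat, Rmult_lt_0_compat; nra. }
  unfold h in Hle. replace ((v - v) / (1 + v * v)) with 0 in Hle by (field; nra). lra.
Qed.

Lemma K_boundary_le_inner b r : 0 < b -> 0 <= r <= sqrt 3 * b / 2 ->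
  K_boundary b r <= 3 * b / 2 - sqrt 3 * r.
Proof.
  rewrite <- qrt3_sq. intros Hb [Hr1 Hr2]. rewrite K_boundary_qrt3.
  pose proof qrt3_pos as Hq. pose proof qrt3_pow4 as H4.
  set (w := 2 * r / (qrt3 * b)).
  assert (Hw : 0 <= w <= qrt3).
  { unfold w. split; [apply Rmult_le_pos; [lra|]; apply Rlt_le, Rinv_0_lt_compat; nra|].
    apply (Rmult_le_reg_r (qrt3 * b)); [nra|]. field_simplify; [nra|lra]. }
  pose proof (atan_sub_le qrt3 w ltac:(lra)) as HA.
  assert (HA2 : (qrt3 ^ 3 + qrt3) / 2 * b * (atan qrt3 - atan w)
                <= (qrt3 ^ 3 + qrt3) / 2 * b * ((qrt3 - w) / (1 + qrt3 * w))).
  { apply Rmult_le_compat_l; [|exact HA]. apply Rmult_le_pos; [|lra]. nra. }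
  replace ((qrt3 ^ 3 + qrt3) / 2 * b * ((qrt3 - w) / (1 + qrt3 * w)))
    with ((qrt3 ^ 2 + 1) * b * (qrt3 ^ 2 * b - 2 * r) / (2 * (b + 2 * r))) in HA2
    by (unfold w; field; repeat split; nra).
  assert (Hf : (qrt3 ^ 2 + 1) * b * (qrt3 ^ 2 * b - 2 * r) / (2 * (b + 2 * r))
               <= (qrt3 ^ 2 + 1) * (qrt3 ^ 2 * b - 2 * r) / 2).
  { apply (Rmult_le_reg_r (2 * (b + 2 * r))); [nra|].
    field_simplify; [|nra].
    assert (0 <= (qrt3 ^ 2 + 1) * (qrt3 ^ 2 * b - 2 * r)) by (apply Rmult_le_pos; nra).
    nra. }
  assert (E : r - qrt3 ^ 2 / 2 * b + (qrt3 ^ 2 + 1) * (qrt3 ^ 2 * b - 2 * r) / 2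
              = 3 * b / 2 - qrt3 ^ 2 * r + (qrt3 ^ 4 - 3) * b / 2) by field.
  rewrite H4 in E. lra.
Qed.

Lemma K_boundary_ge_outer b r : 0 < b -> sqrt 3 * b / 2 <= r ->
  r - sqrt 3 / 2 * b - (sqrt 3 + 1) * b * (2 * r - sqrt 3 * b) / (2 * (b + 2 * r))
  <= K_boundary b r.
Proof.
  rewrite <- qrt3_sq. intros Hb Hr. rewrite K_boundary_qrt3. pose proof qrt3_pos as Hq.
  set (w := 2 * r / (qrt3 * b)).
  assert (Hw : qrt3 <= w).
  { unfold w. apply (Rmult_le_reg_r (qrt3 * b)); [nra|]. field_simplify; [nra|lra]. }
  pose proof (atan_sub_le w qrt3 ltac:(lra)) as HA.
  assert (HA2 : (qrt3 ^ 3 + qrt3) / 2 * b * (atan w - atan qrt3)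
                <= (qrt3 ^ 3 + qrt3) / 2 * b * ((w - qrt3) / (1 + w * qrt3))).
  { apply Rmult_le_compat_l; [|exact HA]. apply Rmult_le_pos; [|lra]. nra. }
  replace ((qrt3 ^ 3 + qrt3) / 2 * b * ((w - qrt3) / (1 + w * qrt3)))
    with ((qrt3 ^ 2 + 1) * b * (2 * r - qrt3 ^ 2 * b) / (2 * (b + 2 * r))) in HA2
    by (unfold w; field; repeat split; nra).
  lra.
Qed.

Lemma K_boundary_outer_quadratic b r W : 0 < b -> sqrt 3 * b / 2 <= r -> W >= K_boundary b r ->
  4 * r ^ 2 - 4 * r * (sqrt 3 * b + W) + 3 * b ^ 2 - 2 * W * b <= 0.
Proof.
  intros Hb Hr HW. pose proof (K_boundary_ge_outer b r Hb Hr) as Hg.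
  pose proof sqrt3_bounds as [Hs3 Hs32].
  assert (Hpos : 0 < b + 2 * r) by nra.
  assert (HW2 : (r - sqrt 3 / 2 * b - (sqrt 3 + 1) * b * (2 * r - sqrt 3 * b) / (2 * (b + 2 * r)))
                * (2 * (b + 2 * r)) <= W * (2 * (b + 2 * r)))
    by (apply Rmult_le_compat_r; lra).
  replace ((r - sqrt 3 / 2 * b - (sqrt 3 + 1) * b * (2 * r - sqrt 3 * b) / (2 * (b + 2 * r)))
           * (2 * (b + 2 * r)))
    with (2 * r * (b + 2 * r) - sqrt 3 * b * (b + 2 * r) - (sqrt 3 + 1) * b * (2 * r - sqrt 3 * b))
    in HW2 by (field; lra).
  nra.
Qed.

Lemma is_derive_K_boundary b r : 0 < b ->
  is_derive (K_boundary b) r ((4 * r ^ 2 - 3 * b ^ 2) / (sqrt 3 * b ^ 2 + 4 * r ^ 2)).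
Proof.
  intros Hb. pose proof qrt3_pos as Hq. pose proof qrt3_pow4 as H4.
  assert (Hden : 0 < qrt3 ^ 2 * b ^ 2 + 4 * r ^ 2) by (pose proof (pow2_ge_0 r); nra).
  apply (is_derive_ext (fun r => r - (qrt3 ^ 3 + qrt3) / 2 * b * atan (2 * r / (qrt3 * b))
      - qrt3 ^ 2 / 2 * b + (qrt3 ^ 3 + qrt3) / 2 * b * atan qrt3)).
  { intros s. now rewrite K_boundary_qrt3. }
  rewrite <- qrt3_sq.
  auto_derive; [lra|].
  replace (3 * b ^ 2) with (qrt3 ^ 4 * b ^ 2) by now rewrite H4.
  field. split; [lra|split; lra].
Qed.

(** * Polynomial inequalities *)

Lemma outer_rate_aux a r s3 : 1.732 < s3 -> s3 ^ 2 = 3 -> 1 / 3 <= a <= 0.775 -> s3 * a <= r ->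
  0.59 * r - 1.5 + 3 * a < 0 ->
  a ^ 4 <= 4 / 3 * (r - (0.59 * r - 1.5 + 3 * a))
           * ((0.59 * r - 1.5 + 3 * a) * r ^ 2 + s3 * a ^ 2 * r).
Proof.
  intros Hs Hs2 Ha Hr Hk.
  assert (r < 0.85) by lra. assert (1.732 * a <= r) by nra. assert (a < 0.38) by lra.
  assert (0.08 <= 0.59 * r ^ 2 - (1.5 - 3 * a) * r + 1.732 * a ^ 2).
  { assert (0.08 <= 1.732 * a ^ 2 - (1.5 - 3 * a) ^ 2 / 2.36) by nra.
    assert (0 <= 0.59 * (r - (1.5 - 3 * a) / 1.18) ^ 2)
      by (apply Rmult_le_pos; [lra|apply pow2_ge_0]).
    nra. }
  assert (0.08 * r <= (0.59 * r - 1.5 + 3 * a) * r ^ 2 + s3 * a ^ 2 * r).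
  { assert (0 <= (s3 - 1.732) * a ^ 2 * r) by (apply Rmult_le_pos; [apply Rmult_le_pos|]; nra).
    nra. }
  assert (1.5 - 2.3 * a <= r - (0.59 * r - 1.5 + 3 * a)) by nra.
  assert (0.04 <= 0.08 * r) by nra.
  assert (0.04 * (1.5 - 2.3 * a)
          <= (r - (0.59 * r - 1.5 + 3 * a)) * ((0.59 * r - 1.5 + 3 * a) * r ^ 2 + s3 * a ^ 2 * r))
    by nra.
  assert (a ^ 4 <= 0.38 ^ 3 * a) by (assert (a ^ 3 <= 0.38 ^ 3) by (apply pow_incr; lra); nra).
  nra.
Qed.

(* Splitting on the sign of 0.59 r - 1.5 + 3a; the negative case is a completed square
   whose remainder is [outer_rate_aux]. *)
Lemma outer_rate_poly a n r s3 : 1.732 < s3 -> s3 ^ 2 = 3 -> 1 / 3 <= a <= 0.775 -> - a <= n <= a ->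
  s3 * a <= r -> 3 * n <= s3 * r -> - 3 * n <= s3 * r ->
  0 <= 0.59 * r * (r ^ 2 - 3 * n ^ 2) + 3 * n ^ 2 * (r - n) + a ^ 2 * (s3 * r + 3 * n)
       - (1.5 - 3 * a) * (r ^ 2 - 3 * n ^ 2).
Proof.
  intros Hs Hs2 Ha Hn Hr Hn1 Hn2.
  assert (0 <= r ^ 2 - 3 * n ^ 2) by nra.
  assert (0 <= r) by nra.
  destruct (Rle_dec 0 (0.59 * r - 1.5 + 3 * a)) as [Hk|Hk].
  { assert (0 <= s3 * r + 3 * n) by lra. assert (0 <= r - n) by nra. nra. }
  apply Rnot_le_lt in Hk.
  assert (0.59 * r * (r ^ 2 - 3 * n ^ 2) - (1.5 - 3 * a) * (r ^ 2 - 3 * n ^ 2)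
          >= (0.59 * r - 1.5 + 3 * a) * r ^ 2 - 3 * (0.59 * r - 1.5 + 3 * a) * n ^ 2) by nra.
  pose proof (outer_rate_aux a r s3 Hs Hs2 Ha Hr Hk) as Haux.
  set (k := 0.59 * r - 1.5 + 3 * a) in *.
  assert (1.732 * a <= r) by nra.
  assert (Hrk : 0 < r - k) by (unfold k in *; lra).
  destruct (Rle_dec 0 n) as [Hn0|Hn0].
  - assert (0 <= s3 * a ^ 2 * r + k * r ^ 2) by (unfold k in *; nra).
    assert (0 <= n ^ 2 * (r - n)) by (apply Rmult_le_pos; nra).
    assert (0 <= - k * n ^ 2) by nra. nra.
  - apply Rnot_le_lt in Hn0.
    assert (0 <= k * r ^ 2 + s3 * a ^ 2 * r + 3 * (r - k) * n ^ 2 + 3 * a ^ 2 * n).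
    { apply (Rmult_le_reg_l (4 * (r - k) / 3)); [lra|]. rewrite Rmult_0_r.
      replace (4 * (r - k) / 3 * (k * r ^ 2 + s3 * a ^ 2 * r + 3 * (r - k) * n ^ 2 + 3 * a ^ 2 * n))
        with ((2 * (r - k) * (- n) - a ^ 2) ^ 2
              + (4 / 3 * (r - k) * (k * r ^ 2 + s3 * a ^ 2 * r) - a ^ 4))
        by (unfold k; field).
      pose proof (pow2_ge_0 (2 * (r - k) * (- n) - a ^ 2)). lra. }
    assert (0 <= n ^ 2 * (- n)) by (apply Rmult_le_pos; nra).
    nra.
Qed.

Lemma outer_dist2_rate_le a n L c r s3 : 1.732 < s3 -> s3 ^ 2 = 3 -> 1 / 3 <= a <= 0.775 ->
  - a <= n <= a -> 0 <= L -> c ^ 2 <= L ^ 3 / 6 -> 0 <= r -> r ^ 2 = 3 * n ^ 2 + L ->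
  3 * a ^ 2 <= r ^ 2 ->
  3 * n ^ 3 + c - 3 / 2 * (2 * a - 1) * L - 3 * a ^ 2 * n <= r ^ 3 + s3 * a ^ 2 * r.
Proof.
  intros Hs Hs2 Ha Hn HL Hc Hr Hr2 Hra.
  assert (Hc2 : c <= 0.41 * r * L).
  { assert (0 <= r * L) by (apply Rmult_le_pos; auto).
    destruct (Rle_dec c 0); [nra|].
    assert (L <= r ^ 2) by nra.
    assert (L ^ 3 <= L ^ 2 * r ^ 2) by (assert (0 <= L ^ 2) by nra; nra).
    assert (c ^ 2 <= (0.41 * r * L) ^ 2) by nra. nra. }
  assert (Hsa : s3 * a <= r) by nra.
  assert (3 * n <= s3 * r) by nra. assert (- 3 * n <= s3 * r) by nra.
  pose proof (outer_rate_poly a n r s3 ltac:(lra) Hs2 Ha Hn Hsa ltac:(lra) ltac:(lra)).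
  replace L with (r ^ 2 - 3 * n ^ 2) in * by lra.
  nra.
Qed.

Lemma in_K_perp_aux W : 0 <= W <= 4.65 ->
  4 * (1.7321 * 1.55 + W) ^ 2 * (W ^ 2 + 2 * 2.7321 * 1.55 * W)
  < (18 + 24 * W + 22 / 3 * W ^ 2 - 1.55 * (6 + 4 * 1.7321) * W) ^ 2.
Proof. intros. nra. Qed.

(* In the outer part of K, r is below the larger root of the quadratic of
   [K_boundary_outer_quadratic]. *)
Lemma in_K_perp_lt r W b s3 : 1.732 < s3 < 1.7321 -> s3 ^ 2 = 3 -> 0 < b <= 1.55 ->
  0 <= W <= 3 * b -> 0 <= r ->
  (r <= s3 * b / 2 \/ 4 * r ^ 2 - 4 * r * (s3 * b + W) + 3 * b ^ 2 - 2 * W * b <= 0) ->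
  r ^ 2 - (W - 3 * b / 2) ^ 2 / 3 < 2 * (3 / 2 + W) ^ 2.
Proof.
  intros Hs Hs2 Hb HW Hr [H|H]; [assert (r <= 1.35) by nra; nra|].
  set (A := s3 * b + W). set (D2 := W ^ 2 + 2 * (s3 + 1) * b * W).
  set (E := 18 + 24 * W + 22 / 3 * W ^ 2 - b * W * (6 + 4 * s3)).
  assert (HbW : 0 <= b * W) by nra.
  assert (HD2 : 0 <= D2) by (unfold D2; nra).
  set (D := sqrt D2).
  assert (HD : 0 <= D) by apply sqrt_pos.
  assert (HDD : D ^ 2 = D2) by (unfold D; rewrite <- Rsqr_pow2; now apply Rsqr_sqrt).
  assert (HrD : 2 * r <= A + D).
  { assert ((2 * r - A) ^ 2 <= D2) by (unfold A, D2; nra).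
    destruct (Rle_dec (2 * r - A) 0); nra. }
  assert (HA : 0 <= A) by (unfold A; nra).
  assert (4 * r ^ 2 <= (A + D) ^ 2) by nra.
  assert (EE : 4 * (2 * (3 / 2 + W) ^ 2 + (W - 3 * b / 2) ^ 2 / 3) - A ^ 2 - D2
               = E + (3 - s3 ^ 2) * b ^ 2) by (unfold E, A, D2; field).
  rewrite Hs2 in EE.
  assert (b * W * (6 + 4 * s3) <= 1.55 * W * (6 + 4 * 1.7321)) by (apply Rmult_le_compat; nra).
  assert (HAb : A ^ 2 <= (1.7321 * 1.55 + W) ^ 2) by (unfold A; apply pow_incr; nra).
  assert (HD2b : D2 <= W ^ 2 + 2 * 2.7321 * 1.55 * W) by (unfold D2; nra).
  assert (HEb : 18 + 24 * W + 22 / 3 * W ^ 2 - 1.55 * (6 + 4 * 1.7321) * W <= E) by (unfold E; lra).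
  assert (0 < 18 + 24 * W + 22 / 3 * W ^ 2 - 1.55 * (6 + 4 * 1.7321) * W) by nra.
  pose proof (in_K_perp_aux W ltac:(lra)).
  assert (4 * A ^ 2 * D2 < E ^ 2).
  { assert (4 * A ^ 2 * D2 <= 4 * (1.7321 * 1.55 + W) ^ 2 * (W ^ 2 + 2 * 2.7321 * 1.55 * W))
      by (apply Rmult_le_compat; nra).
    assert ((18 + 24 * W + 22 / 3 * W ^ 2 - 1.55 * (6 + 4 * 1.7321) * W) ^ 2 <= E ^ 2)
      by (apply pow_incr; lra).
    lra. }
  assert (2 * A * D < E).
  { assert ((2 * A * D) ^ 2 < E ^ 2)
      by (replace ((2 * A * D) ^ 2) with (4 * A ^ 2 * D ^ 2) by ring; nra).
    assert (0 <= 2 * A * D) by nra. nra. }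
  nra.
Qed.

(** * Invariance of K_mu *)

Section KGap.
Variables (mu : R) (x y z : R -> R).
Hypothesis Hs : is_solution mu x y z.

Definition K_gap t := along V x y z t - K_boundary (1 + mu) (along (r_mu mu) x y z t).

Definition K_gap_rate t :=
  let r := along (r_mu mu) x y z t in
  along (dist2 ((1 + mu) / 2)) x y z t - 3 * ((1 + mu) / 2) ^ 2
  - (4 * r ^ 2 - 3 * (1 + mu) ^ 2) / (sqrt 3 * (1 + mu) ^ 2 + 4 * r ^ 2)
    * (dist2_rate mu x y z t / r).

Lemma is_derive_r_mu_along t : 0 < along (dist2 ((1 + mu) / 2)) x y z t ->
  is_derive (along (r_mu mu) x y z) t (dist2_rate mu x y z t / along (r_mu mu) x y z t).
Proof.
  intros HS. set (S := along (dist2 ((1 + mu) / 2)) x y z) in *.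
  assert (hsqrt : is_derive sqrt (S t) (/ (2 * sqrt (S t))))
    by now apply is_derive_Reals, derivable_pt_lim_sqrt.
  pose proof (is_derive_comp sqrt S t _ _ hsqrt (is_derive_dist2_along mu x y z Hs t)) as hc.
  change (along (r_mu mu) x y z) with (fun s => sqrt (S s)). cbv beta.
  replace (dist2_rate mu x y z t / sqrt (S t))
    with (scal (2 * dist2_rate mu x y z t) (/ (2 * sqrt (S t)))); [exact hc|].
  unfold scal; simpl. unfold mult; simpl. field. apply Rgt_not_eq, sqrt_lt_R0, HS.
Qed.

Lemma is_derive_K_gap t : 0 < 1 + mu -> 0 < along (dist2 ((1 + mu) / 2)) x y z t ->
  is_derive K_gap t (K_gap_rate t).
Proof.
  intros Hb HS.
  pose proof (is_derive_comp (K_boundary (1 + mu)) (along (r_mu mu) x y z) t _ _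
    (is_derive_K_boundary (1 + mu) _ Hb) (is_derive_r_mu_along t HS)) as hg.
  pose proof (is_derive_minus _ _ t _ _ (is_derive_V_along_dist2 mu x y z Hs t) hg) as h.
  replace (K_gap_rate t) with (minus
    (along (dist2 ((1 + mu) / 2)) x y z t - 3 * ((1 + mu) / 2) ^ 2)
    (scal (dist2_rate mu x y z t / along (r_mu mu) x y z t)
      ((4 * along (r_mu mu) x y z t ^ 2 - 3 * (1 + mu) ^ 2)
       / (sqrt 3 * (1 + mu) ^ 2 + 4 * along (r_mu mu) x y z t ^ 2)))); [exact h|].
  unfold K_gap_rate, minus, scal, plus, opp; simpl. unfold mult; simpl. ring.
Qed.

(* In the outer region both factors of the boundary term are controlled by
   [outer_dist2_rate_le], and the product collapses to r^2 - 3 a^2. *)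
Lemma K_gap_rate_ge0 t : 2 / 3 <= 1 + mu <= 1.55 -> 0 <= along V x y z t <= 3 * (1 + mu) ->
  3 * ((1 + mu) / 2) ^ 2 < along (dist2 ((1 + mu) / 2)) x y z t -> 0 <= K_gap_rate t.
Proof.
  intros Hb HV HS. pose proof sqrt3_bounds as [Hs3 Hs32].
  set (a := (1 + mu) / 2). fold a in HS.
  set (r := along (r_mu mu) x y z t).
  assert (Hrr : r ^ 2 = along (dist2 a) x y z t) by apply r_mu_sq.
  assert (Hr : 0 < r) by (pose proof (r_mu_ge0 mu (x t) (y t) (z t)); unfold r, along in *; nra).
  pose proof (dist2_decomp a (x t) (y t) (z t)) as Hdec.
  pose proof (perp_norm2_ge0 (x t) (y t) (z t)) as HL.
  pose proof (cyclic_cubic_sq_le (x t) (y t) (z t)) as HC.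
  assert (HP : dist2_rate mu x y z t <= r ^ 3 + sqrt 3 * a ^ 2 * r).
  { unfold dist2_rate. replace mu with (2 * a - 1) at 2 by (unfold a; field).
    unfold along, V in *.
    apply (outer_dist2_rate_le a _ _ _ r (sqrt 3)); unfold a in *; lra. }
  unfold K_gap_rate. fold a r. replace (1 + mu) with (2 * a) by (unfold a; field).
  assert (Hden : 0 < sqrt 3 * (2 * a) ^ 2 + 4 * r ^ 2) by nra.
  assert (Hg : 0 <= (4 * r ^ 2 - 3 * (2 * a) ^ 2) / (sqrt 3 * (2 * a) ^ 2 + 4 * r ^ 2))
    by (apply Rmult_le_pos; [nra|]; apply Rlt_le, Rinv_0_lt_compat, Hden).
  assert (HPr : dist2_rate mu x y z t / r <= r ^ 2 + sqrt 3 * a ^ 2)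
    by (apply (Rmult_le_reg_r r); [lra|]; field_simplify; nra).
  assert (E : (4 * r ^ 2 - 3 * (2 * a) ^ 2) / (sqrt 3 * (2 * a) ^ 2 + 4 * r ^ 2)
              * (r ^ 2 + sqrt 3 * a ^ 2) = r ^ 2 - 3 * a ^ 2) by (field; lra).
  pose proof (Rmult_le_compat_l _ _ _ Hg HPr). lra.
Qed.

Lemma continuity_K_gap t : 0 < 1 + mu -> continuity_pt K_gap t.
Proof.
  intros Hb.
  assert (hr : continuity_pt (along (r_mu mu) x y z) t).
  { change (continuity_pt (comp sqrt (along (dist2 ((1 + mu) / 2)) x y z)) t).
    apply continuity_pt_comp; [exact (continuity_dist2_along mu x y z Hs t)|].
    apply continuity_pt_sqrt, dist2_ge0. }
  change (continuity_pt (minus_fct (along V x y z)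
    (comp (K_boundary (1 + mu)) (along (r_mu mu) x y z))) t).
  apply continuity_pt_minus; [exact (continuity_V_along mu x y z Hs t)|].
  apply continuity_pt_comp; [exact hr|].
  eapply is_derive_continuity_pt, is_derive_K_boundary, Hb.
Qed.
End KGap.

Lemma in_K_inner mu x y z : 0 < 1 + mu -> 0 <= V x y z <= 3 * (1 + mu) ->
  dist2 ((1 + mu) / 2) x y z <= 3 * ((1 + mu) / 2) ^ 2 -> in_K mu x y z.
Proof.
  intros Hb HV HS. apply in_K_iff. split; [|exact HV].
  pose proof sqrt3_bounds as [Hs3 Hs32].
  set (r := r_mu mu x y z). pose proof (r_mu_ge0 mu x y z) as Hr. fold r in Hr.
  pose proof (r_mu_sq mu x y z) as Hrr. fold r in Hrr.
  assert (Hrle : r <= sqrt 3 * (1 + mu) / 2).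
  { assert (r ^ 2 <= (sqrt 3 * (1 + mu) / 2) ^ 2).
    { replace ((sqrt 3 * (1 + mu) / 2) ^ 2) with (sqrt 3 ^ 2 * ((1 + mu) / 2) ^ 2) by field.
      rewrite Hs32. lra. }
    assert (0 <= sqrt 3 * (1 + mu) / 2) by nra. nra. }
  pose proof (K_boundary_le_inner (1 + mu) r Hb (conj Hr Hrle)) as Hg.
  pose proof (dist2_decomp ((1 + mu) / 2) x y z) as Hdec.
  pose proof (perp_norm2_ge0 x y z).
  assert (3 * (1 + mu) / 2 - sqrt 3 * r <= V x y z).
  { unfold V. set (n := (x + y + z) / 3 - (1 + mu) / 2) in *.
    assert (3 * n ^ 2 <= r ^ 2) by lra.
    assert (9 * n ^ 2 <= (sqrt 3 * r) ^ 2) by nra.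
    assert (0 <= sqrt 3 * r) by nra.
    assert (- 3 * n <= sqrt 3 * r) by nra. unfold n in *. lra. }
  lra.
Qed.

(* At a maximum of V we have V' = r^2 - 3 a^2 = 0, so the orbit meets the inner region;
   leaving [K] would require K_gap to decrease while the orbit stays in the outer
   region, where K_gap is nondecreasing. *)
Lemma periodic_K_gap_ge0 mu x y z : periodic_solution mu x y z -> 2 / 3 <= 1 + mu <= 1.55 ->
  forall t, 0 <= K_gap mu x y z t.
Proof.
  intros Hps Hb. pose proof (periodic_V_bounds _ _ _ _ Hps ltac:(lra)) as HV.
  destruct Hps as [Hs [T [HT Hp]]].
  set (S := along (dist2 ((1 + mu) / 2)) x y z).
  assert (Hinner : forall s, S s <= 3 * ((1 + mu) / 2) ^ 2 -> 0 <= K_gap mu x y z s).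
  { intros s HSs.
    destruct (proj1 (in_K_iff _ _ _ _) (in_K_inner mu (x s) (y s) (z s) ltac:(lra) (HV s) HSs))
      as [HK _].
    unfold K_gap, along. lra. }
  destruct (periodic_max _ T HT (is_period_along V x y z T Hp) (continuity_V_along mu x y z Hs))
    as [t0 Hmax].
  pose proof (is_derive_max_0 _ _ _ (is_derive_V_along_dist2 mu x y z Hs t0) Hmax) as E0.
  intros t. destruct (Rle_lt_dec 0 (K_gap mu x y z t)) as [ok|Hneg]; [exact ok|exfalso].
  destruct (shift_below T HT t0 t) as [k Hk].
  assert (HF0 : 0 <= K_gap mu x y z (t0 + IZR k * T)).
  { apply Hinner. unfold S. rewrite (periodic_IZR _ T (is_period_along _ x y z T Hp) k t0). lra. }
  destruct (last_nonneg_before (K_gap mu x y z) _ t Hk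
    (fun s _ => continuity_K_gap mu x y z Hs s ltac:(lra)) HF0 Hneg) as [m [Hm [HFm Hafter]]].
  assert (Houter : forall s, m < s <= t -> 3 * ((1 + mu) / 2) ^ 2 < S s).
  { intros s Hst. destruct (Rlt_le_dec (3 * ((1 + mu) / 2) ^ 2) (S s)) as [h|h]; [exact h|].
    specialize (Hinner s h). specialize (Hafter s Hst). lra. }
  assert (K_gap mu x y z m <= K_gap mu x y z t); [|lra].
  apply (is_derive_ge0_le _ (K_gap_rate mu x y z)); [lra| | |].
  - intros s Hst. apply is_derive_K_gap; [exact Hs|lra|].
    specialize (Houter s ltac:(lra)). pose proof (pow2_ge_0 ((1 + mu) / 2)). unfold S in *. lra.
  - intros s _. apply continuity_K_gap; [exact Hs|lra].
  - intros s Hst. apply K_gap_rate_ge0; [lra|apply HV|apply Houter; lra].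
Qed.

Lemma periodic_in_K mu x y z : -1 < mu <= 55 / 100 -> periodic_solution mu x y z ->
  forall t, in_K mu (x t) (y t) (z t).
Proof.
  intros Hmu Hps t. pose proof (periodic_V_bounds _ _ _ _ Hps ltac:(lra) t) as HVt.
  destruct (Rle_lt_dec (1 + mu) (2 / 3)) as [Hb|Hb].
  - pose proof (periodic_small_mu_stationary _ _ _ _ Hps ltac:(lra)) as Hst.
    destruct Hps as [Hs _].
    assert (Hc : forall s, along V x y z s = along V x y z 0)
      by (intros s; unfold along; now destruct (Hst s) as [-> [-> ->]]).
    pose proof (constant_is_derive_0 _ _ _ Hc (is_derive_V_along_dist2 mu x y z Hs t)).
    apply in_K_inner; [lra|exact HVt|unfold along in *; lra].
  - pose proof (periodic_K_gap_ge0 _ _ _ _ Hps ltac:(lra) t) as HF.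
    apply in_K_iff. unfold K_gap, along in *. lra.
Qed.

(** * Winding *)

Section AngleLift.
Variables (p1 p2 dp1 dp2 th : R -> R).
Hypothesis Hp1 : forall t, is_derive p1 t (dp1 t).
Hypothesis Hp2 : forall t, is_derive p2 t (dp2 t).
Hypothesis Hnz : forall t, 0 < p1 t ^ 2 + p2 t ^ 2.
Hypothesis Hth : forall t,
  is_derive th t ((p1 t * dp2 t - p2 t * dp1 t) / (p1 t ^ 2 + p2 t ^ 2)).
Hypothesis Hth0 : th 0 = 0.

(* Rotating p(t) back by th(t) yields a vector of fixed direction p(0): the squares of its
   cross and dot products with p(0), divided by |p(t)|^2, are constant. *)
Let q1 t := p1 t * cos (th t) + p2 t * sin (th t).
Let q2 t := - p1 t * sin (th t) + p2 t * cos (th t).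
Let cross t := p1 0 * q2 t - p2 0 * q1 t.
Let dot t := p1 0 * q1 t + p2 0 * q2 t.

Lemma cross_sq_const : forall a b,
  cross a ^ 2 / (p1 a ^ 2 + p2 a ^ 2) = cross b ^ 2 / (p1 b ^ 2 + p2 b ^ 2).
Proof.
  apply (is_derive_0_eq (fun t => cross t ^ 2 / (p1 t ^ 2 + p2 t ^ 2))). intros t.
  pose proof (Hp1 t) as h1. pose proof (Hp2 t) as h2. pose proof (Hth t) as h3.
  pose proof (Hnz t). unfold cross, q1, q2. auto_derive.
  - repeat split; try (eexists; eassumption). lra.
  - fold_Derive. rewrite (is_derive_unique _ _ _ h1), (is_derive_unique _ _ _ h2),
      (is_derive_unique _ _ _ h3). field. lra.
Qed.

Lemma dot_sq_const : forall a b,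
  dot a ^ 2 / (p1 a ^ 2 + p2 a ^ 2) = dot b ^ 2 / (p1 b ^ 2 + p2 b ^ 2).
Proof.
  apply (is_derive_0_eq (fun t => dot t ^ 2 / (p1 t ^ 2 + p2 t ^ 2))). intros t.
  pose proof (Hp1 t) as h1. pose proof (Hp2 t) as h2. pose proof (Hth t) as h3.
  pose proof (Hnz t). unfold dot, q1, q2. auto_derive.
  - repeat split; try (eexists; eassumption). lra.
  - fold_Derive. rewrite (is_derive_unique _ _ _ h1), (is_derive_unique _ _ _ h2),
      (is_derive_unique _ _ _ h3). field. lra.
Qed.

Lemma angle_lift_closed T : 0 < T -> p1 T = p1 0 -> p2 T = p2 0 ->
  sin (th T) = 0 /\ 0 < cos (th T).
Proof.
  intros HT HT1 HT2. pose proof (Hnz 0) as HN0.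
  set (N0 := p1 0 ^ 2 + p2 0 ^ 2) in HN0.
  assert (Hc0 : cross 0 = 0) by (unfold cross, q1, q2; rewrite Hth0, sin_0, cos_0; ring).
  assert (Hd0 : dot 0 = N0) by (unfold dot, q1, q2, N0; rewrite Hth0, sin_0, cos_0; ring).
  assert (HcT : cross T = - N0 * sin (th T)) by (unfold cross, q1, q2, N0; rewrite HT1, HT2; ring).
  assert (HdT : dot T = N0 * cos (th T)) by (unfold dot, q1, q2, N0; rewrite HT1, HT2; ring).
  assert (Hsin : sin (th T) = 0).
  { pose proof (cross_sq_const T 0) as E. rewrite Hc0, HT1, HT2 in E. fold N0 in E.
    assert (HcT2 : cross T ^ 2 = 0).
    { replace (cross T ^ 2) with (cross T ^ 2 / N0 * N0) by (field; lra).
      rewrite E. field. lra. }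
    rewrite <- Rsqr_pow2 in HcT2. apply Rsqr_0_uniq in HcT2. rewrite HcT in HcT2.
    apply Rmult_integral in HcT2 as [h|h]; [lra|exact h]. }
  split; [exact Hsin|].
  assert (Hdot_nz : forall t, dot t <> 0).
  { intros t Ht. pose proof (dot_sq_const t 0) as E. rewrite Ht, Hd0 in E. fold N0 in E.
    pose proof (Hnz t).
    replace (0 ^ 2 / (p1 t ^ 2 + p2 t ^ 2)) with 0 in E by (field; lra).
    replace (N0 ^ 2 / N0) with N0 in E by (field; lra). lra. }
  assert (Hcont : continuity (fun t => - dot t)).
  { intros t. pose proof (Hp1 t) as h1. pose proof (Hp2 t) as h2. pose proof (Hth t) as h3.
    assert (hd : ex_derive (fun t => - dot t) t)
      by (unfold dot, q1, q2; auto_derive; repeat split; eexists; eassumption).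
    destruct hd as [l hl]. eapply is_derive_continuity_pt, hl. }
  destruct (Rle_lt_dec (dot T) 0) as [h|h].
  - exfalso. assert (dot T < 0) by (specialize (Hdot_nz T); lra).
    destruct (IVT (fun t => - dot t) 0 T Hcont HT ltac:(lra) ltac:(lra)) as [c [_ Hc]].
    apply (Hdot_nz c). lra.
  - rewrite HdT in h. nra.
Qed.

End AngleLift.

Lemma RInt_angle_form_le (p1 p2 dp1 dp2 om : R -> R) T : 0 < T ->
  (forall t, is_derive p1 t (dp1 t)) -> (forall t, is_derive p2 t (dp2 t)) ->
  (forall t, continuity_pt om t) -> (forall t, 0 < p1 t ^ 2 + p2 t ^ 2) ->
  (forall t, om t = (p1 t * dp2 t - p2 t * dp1 t) / (p1 t ^ 2 + p2 t ^ 2)) ->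
  p1 T = p1 0 -> p2 T = p2 0 -> (forall t, om t < 0) ->
  RInt om 0 T <= - 2 * PI.
Proof.
  intros HT H1 H2 Hc HN Hom HT1 HT2 Hneg.
  set (th := fun t => RInt om 0 t).
  assert (Hth : forall t, is_derive th t (om t)).
  { intros t. apply (is_derive_RInt om th 0 t).
    - apply filter_forall. intros b. apply (RInt_correct (V := R_CompleteNormedModule)).
      apply (ex_RInt_continuous (V := R_CompleteNormedModule)).
      intros s _. now apply continuity_pt_filterlim.
    - now apply continuity_pt_filterlim. }
  assert (Hth0 : th 0 = 0) by (unfold th; now rewrite RInt_point).
  destruct (angle_lift_closed p1 p2 dp1 dp2 th H1 H2 HN (fun t => eq_ind _ _ (Hth t) _ (Hom t))
    Hth0 T HT HT1 HT2) as [Hsin Hcos].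
  assert (Hlt : th T < th 0).
  { apply (is_derive_lt0_lt th om 0 T HT (fun t _ => Hth t)
      (fun t _ => is_derive_continuity_pt _ _ _ (Hth t)) (fun t _ => Hneg t)). }
  rewrite Hth0 in Hlt. fold (th T).
  destruct (sin_eq_0_0 _ Hsin) as [k Hk]. rewrite Hk in *.
  pose proof PI_RGT_0.
  assert (Hk1 : (k < 0)%Z) by (apply lt_IZR; nra).
  destruct (Z.eq_dec k (-1)) as [->|Hne].
  - exfalso. replace (IZR (-1) * PI) with (- PI) in Hcos by (simpl; ring).
    rewrite cos_neg, cos_PI in Hcos. lra.
  - assert (Hk2 : (k <= -2)%Z) by lia. apply IZR_le in Hk2. nra.
Qed.

Lemma dtheta_numerator_neg mu x y z : 0 < 1 + mu <= 1.55 -> in_K mu x y z -> ~ in_Delta x y z ->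
  (z - y) * sprott_fx mu x y z + (x - z) * sprott_fy mu x y z + (y - x) * sprott_fz mu x y z < 0.
Proof.
  intros Hb HK HD. apply in_K_iff in HK as [HK HV].
  pose proof (perp_norm2_gt0 x y z HD) as HL.
  rewrite dtheta_numerator_flow.
  pose proof sqrt3_bounds as [Hs3 Hs32].
  set (r := r_mu mu x y z) in *.
  pose proof (r_mu_ge0 mu x y z) as Hr0. pose proof (r_mu_sq mu x y z) as Hrr. fold r in Hr0, Hrr.
  assert (Hor : r <= sqrt 3 * (1 + mu) / 2 \/
    4 * r ^ 2 - 4 * r * (sqrt 3 * (1 + mu) + V x y z) + 3 * (1 + mu) ^ 2
    - 2 * V x y z * (1 + mu) <= 0).
  { destruct (Rle_dec r (sqrt 3 * (1 + mu) / 2)) as [h|h]; [now left|right].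
    apply K_boundary_outer_quadratic; [lra|lra|exact HK]. }
  pose proof (in_K_perp_lt r (V x y z) (1 + mu) (sqrt 3) Hs3 Hs32 Hb HV Hr0 Hor) as HI.
  replace (r ^ 2 - (V x y z - 3 * (1 + mu) / 2) ^ 2 / 3) with (perp_norm2 x y z) in HI
    by (rewrite Hrr, dist2_decomp; unfold V; field).
  pose proof (rotation_cubic_sq_le x y z) as HC.
  set (L := perp_norm2 x y z) in *. set (c := rotation_cubic x y z) in *.
  unfold V in *.
  destruct (Rle_lt_dec c 0) as [h|h].
  - assert (0 < L * (1 + 2 * (x + y + z) / 3)) by (apply Rmult_lt_0_compat; lra). lra.
  - assert (c ^ 2 < (L * (3 / 2 + (x + y + z))) ^ 2).
    { assert (L ^ 3 / 2 < L ^ 2 * (3 / 2 + (x + y + z)) ^ 2) by (assert (0 < L ^ 2) by nra; nra).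
      nra. }
    assert (0 < L * (3 / 2 + (x + y + z))) by (apply Rmult_lt_0_compat; lra).
    assert (c < L * (3 / 2 + (x + y + z))) by nra.
    lra.
Qed.

Lemma nonstationary_off_Delta mu x y z : -1 < mu <= 55 / 100 -> periodic_solution mu x y z ->
  ~ stationary x y z -> 2 / 3 < 1 + mu /\ forall t, ~ in_Delta (x t) (y t) (z t).
Proof.
  intros Hmu Hps Hns.
  assert (Hb : 2 / 3 < 1 + mu).
  { destruct (Rle_lt_dec (1 + mu) (2 / 3)) as [h|h]; [|exact h].
    exfalso. apply Hns, (periodic_small_mu_stationary mu); [exact Hps|lra]. }
  split; [exact Hb|]. intros t Ht.
  apply Hns, (periodic_in_Delta_stationary mu); [exact Hps|lra|]. intros s.
  apply perp_norm2_eq0, (perp_along_eq0_everywhere mu x y z Hps ltac:(lra) t).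
  now apply in_Delta_perp_norm2.
Qed.

(* (sqrt 3 (x - y), x + y - 2 z) are the coordinates of x_perp in an orthogonal basis of
   Delta^perp with both vectors of length sqrt 6. *)
Lemma perp_coords_norm2 x y z :
  (sqrt 3 * (x - y)) ^ 2 + (x + y - 2 * z) ^ 2 = 6 * perp_norm2 x y z.
Proof.
  pose proof sqrt3_bounds as [_ Hs32]. unfold perp_norm2.
  replace ((sqrt 3 * (x - y)) ^ 2) with (sqrt 3 ^ 2 * (x - y) ^ 2) by ring.
  rewrite Hs32. field.
Qed.

Lemma dtheta_angle_form x y z u v w : ~ in_Delta x y z ->
  dtheta x y z u v w =
  (sqrt 3 * (x - y) * (u + v - 2 * w) - (x + y - 2 * z) * (sqrt 3 * (u - v)))
  / ((sqrt 3 * (x - y)) ^ 2 + (x + y - 2 * z) ^ 2).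
Proof.
  intros HD. pose proof (perp_norm2_gt0 x y z HD) as HL.
  pose proof sqrt3_bounds as [Hs3 Hs32].
  rewrite perp_coords_norm2. unfold dtheta.
  set (s := sqrt 3) in *. set (L := perp_norm2 x y z) in *.
  set (N := (z - y) * u + (x - z) * v + (y - x) * w).
  replace (s * (x - y) * (u + v - 2 * w) - (x + y - 2 * z) * (s * (u - v)))
    with (2 * s * N) by (unfold N; ring).
  replace (2 * s * N / (6 * L)) with (s ^ 2 / 3 * (/ s * (N / L))) by (field; lra).
  rewrite Hs32. field. lra.
Qed.

Lemma dtheta_flow_neg mu x y z : 0 < 1 + mu <= 1.55 -> in_K mu x y z -> ~ in_Delta x y z ->
  dtheta x y z (sprott_fx mu x y z) (sprott_fy mu x y z) (sprott_fz mu x y z) < 0.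
Proof.
  intros Hb HK HD. pose proof (dtheta_numerator_neg mu x y z Hb HK HD) as HN.
  pose proof sqrt3_bounds as [Hs3 _].
  assert (0 < / sqrt 3) by (apply Rinv_0_lt_compat; lra).
  assert (0 < / perp_norm2 x y z) by (apply Rinv_0_lt_compat, perp_norm2_gt0, HD).
  unfold dtheta, Rdiv. set (N := _ + _ + _) in HN |- *.
  assert (N * / perp_norm2 x y z < 0) by nra. nra.
Qed.

Lemma continuity_dtheta_along mu x y z : is_solution mu x y z ->
  (forall t, ~ in_Delta (x t) (y t) (z t)) -> forall t, continuity_pt (dtheta_along mu x y z) t.
Proof.
  intros Hs HD t. pose proof (perp_norm2_gt0 _ _ _ (HD t)) as HL.
  pose proof sqrt3_bounds as [Hs3 _].
  assert (hd : ex_derive (dtheta_along mu x y z) t).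
  { destruct (solution_is_derive _ _ _ _ Hs t) as [hx [hy hz]].
    unfold dtheta_along, dtheta, perp_norm2, sprott_fx, sprott_fy, sprott_fz in *.
    auto_derive. repeat split; try (eexists; eassumption); lra. }
  destruct hd as [l hl]. eapply is_derive_continuity_pt, hl.
Qed.

Lemma periodic_winding_le mu x y z T : -1 < mu <= 55 / 100 -> is_solution mu x y z ->
  ~ stationary x y z -> minimal_period x y z T ->
  exists pr : Riemann_integrable (dtheta_along mu x y z) 0 T, RiemannInt pr / (2 * PI) <= -1.
Proof.
  intros Hmu Hs Hns [HT [Hp _]].
  assert (Hps : periodic_solution mu x y z) by (split; [exact Hs|now exists T]).
  destruct (nonstationary_off_Delta mu x y z Hmu Hps Hns) as [Hb HD].
  set (fx := fun t => sprott_fx mu (x t) (y t) (z t)).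
  set (fy := fun t => sprott_fy mu (x t) (y t) (z t)).
  set (fz := fun t => sprott_fz mu (x t) (y t) (z t)).
  set (p1 := fun t => sqrt 3 * (x t - y t)). set (p2 := fun t => x t + y t - 2 * z t).
  set (dp1 := fun t => sqrt 3 * (fx t - fy t)). set (dp2 := fun t => fx t + fy t - 2 * fz t).
  assert (Hd1 : forall t, is_derive p1 t (dp1 t))
    by (intros t; unfold p1, dp1, fx, fy; derive_along Hs t; ring).
  assert (Hd2 : forall t, is_derive p2 t (dp2 t))
    by (intros t; unfold p2, dp2, fx, fy, fz; derive_along Hs t; ring).
  assert (HN : forall t, 0 < p1 t ^ 2 + p2 t ^ 2).
  { intros t. unfold p1, p2. rewrite perp_coords_norm2.
    pose proof (perp_norm2_gt0 _ _ _ (HD t)). lra. }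
  destruct (Hp 0) as [Ex [Ey Ez]]. rewrite Rplus_0_l in Ex, Ey, Ez.
  pose proof (RInt_angle_form_le p1 p2 dp1 dp2 (dtheta_along mu x y z) T HT Hd1 Hd2
    (continuity_dtheta_along mu x y z Hs HD) HN
    (fun t => dtheta_angle_form _ _ _ _ _ _ (HD t))
    ltac:(unfold p1; congruence) ltac:(unfold p2; congruence)
    (fun t => dtheta_flow_neg mu _ _ _ ltac:(lra) (periodic_in_K mu x y z Hmu Hps t) (HD t)))
    as HW.
  assert (pr : Riemann_integrable (dtheta_along mu x y z) 0 T)
    by (apply continuity_implies_RiemannInt; [lra|intros; apply continuity_dtheta_along; auto]).
  exists pr. rewrite <- (RInt_Reals _ 0 T pr).
  pose proof PI_RGT_0.
  apply (Rmult_le_reg_r (2 * PI)); [lra|]. unfold Rdiv. rewrite Rmult_assoc, Rinv_l by lra. lra.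
Qed.

Theorem corollary2 :
  (forall mu : R, -1 < mu <= 55 / 100 ->
     (forall x y z : R -> R, periodic_solution mu x y z ->
        forall t : R, in_K mu (x t) (y t) (z t)) /\
     (forall x y z : R -> R, periodic_solution mu x y z -> ~ stationary x y z ->
        forall t : R, in_K mu (x t) (y t) (z t) /\ ~ in_Delta (x t) (y t) (z t)) /\
     (forall (x y z : R -> R) (T : R),
        is_solution mu x y z -> ~ stationary x y z -> minimal_period x y z T ->
        exists pr : Riemann_integrable (dtheta_along mu x y z) 0 T,
          RiemannInt pr / (2 * PI) <= -1)) /\
  (forall x y z : R -> R, periodic_solution (-1) x y z -> stationary x y z).
Proof.
  split; [|exact periodic_mu_m1_stationary].
  intros mu Hmu. split; [|split].
  - intros x y z Hps. now apply periodic_in_K.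
  - intros x y z Hps Hns t. split; [now apply periodic_in_K|].
    now apply (nonstationary_off_Delta mu x y z Hmu Hps Hns).
  - intros x y z T. now apply periodic_winding_le.
Qed.
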